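(* For $\Re(s)>1$, $$\zeta\big(\mathbb{Z}[X]/(X^2),s\big)=\zeta(s)\,\zeta(2s-1),$$ where $\zeta$ is the Riemann zeta function; in particular this function has a double pole at $s=1$.
   Context: For a commutative ring $R$ with identity in which the number $a_n(R)$ of ideals of index $n$ is finite for every $n\in\mathbb{N}$, $\zeta(R,s)=\sum_{n\ge1}a_n(R)n^{-s}$. *)

From Stdlib Require Import Reals ZArith List.
Open Scope R_scope.

(* Modelled as pairs (a,b) : Z*Z standing for a + b*eps, eps = class of X, eps^2 = 0. *)
Definition DN : Type := (Z * Z)%type.
Definition dn_zero : DN := (0%Z, 0%Z).
Definition dn_add (x y : DN) : DN := (fst x + fst y, snd x + snd y)%Z.
Definition dn_opp (x : DN) : DN := (- fst x, - snd x)%Z.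
Definition dn_sub (x y : DN) : DN := dn_add x (dn_opp y).
Definition dn_mul (x y : DN) : DN :=
  (fst x * fst y, fst x * snd y + snd x * fst y)%Z.

Definition is_ideal (I : DN -> Prop) : Prop :=
  I dn_zero /\
  (forall x y, I x -> I y -> I (dn_add x y)) /\
  (forall x, I x -> I (dn_opp x)) /\
  (forall r x, I x -> I (dn_mul r x)).

Definition has_index (I : DN -> Prop) (n : nat) : Prop :=
  exists reps : list DN,
    length reps = n /\
    (forall i j, (i < n)%nat -> (j < n)%nat -> i <> j ->
       ~ I (dn_sub (nth i reps dn_zero) (nth j reps dn_zero))) /\
    (forall x, exists i, (i < n)%nat /\ I (dn_sub x (nth i reps dn_zero))).

Definition ideal_count (n k : nat) : Prop :=
  exists L : list (DN -> Prop),
    length L = k /\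
    (forall i, (i < k)%nat -> is_ideal (nth i L (fun _ => False)) /\
                              has_index (nth i L (fun _ => False)) n) /\
    (forall i j, (i < k)%nat -> (j < k)%nat -> i <> j ->
       exists x, ~ (nth i L (fun _ => False) x <-> nth j L (fun _ => False) x)) /\
    (forall I, is_ideal I -> has_index I n ->
       exists i, (i < k)%nat /\ forall x, I x <-> nth i L (fun _ => False) x).

Definition Cpx : Type := (R * R)%type.
Definition Cre (z : Cpx) : R := fst z.
Definition Cmul (z w : Cpx) : Cpx :=
  (fst z * fst w - snd z * snd w, fst z * snd w + snd z * fst w).
Definition Cscale (a : R) (z : Cpx) : Cpx := (a * fst z, a * snd z).

(* n^{-s} for a positive integer n: exp(-s ln n). *)
Definition Cnpow_neg (n : nat) (s : Cpx) : Cpx :=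
  let l := ln (INR n) in
  (exp (- fst s * l) * cos (snd s * l), - (exp (- fst s * l) * sin (snd s * l))).

Definition Cseries1 (f : nat -> Cpx) (l : Cpx) : Prop :=
  infinite_sum (fun m => fst (f (S m))) (fst l) /\
  infinite_sum (fun m => snd (f (S m))) (snd l).

Definition is_zeta (s z : Cpx) : Prop := Cseries1 (fun n => Cnpow_neg n s) z.

From Stdlib Require Import Reals ZArith List Lia Lra Classical ClassicalEpsilon Wf_nat.
From Coquelicot Require Import Coquelicot.
Open Scope R_scope.

(* An ideal of index n of Z[X]/(X^2) = {a + bX} is a lattice in Z^2. If e is the least
   positive first coordinate of its elements, (e, b0) one of them, and d X the least positive
   multiple of X in it, then the ideal is spanned by (e, t) and (0, d) with t = b0 mod d; its
   index is d e, and stability under multiplication by X forces d | e. Ideals of index n are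
   thus indexed by the pairs (d, t) with d^2 | n and 0 <= t < d, so a_n = sum_{m^2 | n} m and
   sum_n a_n n^-s = sum_m m^(1-2s) sum_k k^-s = zeta(2s-1) zeta(s). The last regrouping holds
   because sum_(m <= N) m^(1-2s) sum_(k <= N/m^2) k^-s tends to the product by Tannery's
   theorem, the series of m^(1-2s) converging absolutely for Re s > 1. *)

Fixpoint rsum (f : nat -> R) (N : nat) : R :=
  match N with O => 0 | S N' => rsum f N' + f (S N') end.

Lemma rsum_ext f g N :
  (forall n, (1 <= n <= N)%nat -> f n = g n) -> rsum f N = rsum g N.
Proof.
  induction N as [|N IH]; intros Hfg; simpl; [reflexivity|].
  rewrite IH, Hfg; [reflexivity|lia|]. intros; apply Hfg; lia.
Qed.

Lemma rsum_plus f g N : rsum (fun n => f n + g n) N = rsum f N + rsum g N.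
Proof. induction N; simpl; [ring|rewrite IHN; ring]. Qed.

Lemma rsum_minus f g N : rsum (fun n => f n - g n) N = rsum f N - rsum g N.
Proof. induction N; simpl; [ring|rewrite IHN; ring]. Qed.

Lemma rsum_scal c f N : rsum (fun n => c * f n) N = c * rsum f N.
Proof. induction N; simpl; [ring|rewrite IHN; ring]. Qed.

Lemma rsum_le f g N :
  (forall n, (1 <= n <= N)%nat -> f n <= g n) -> rsum f N <= rsum g N.
Proof.
  induction N as [|N IH]; intros Hfg; simpl; [lra|].
  assert (f (S N) <= g (S N)) by (apply Hfg; lia).
  assert (rsum f N <= rsum g N) by (apply IH; intros; apply Hfg; lia). lra.
Qed.

Lemma rsum_abs f N : Rabs (rsum f N) <= rsum (fun n => Rabs (f n)) N.
Proof.
  induction N; simpl; [rewrite Rabs_R0; lra|].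
  eapply Rle_trans; [apply Rabs_triang|lra].
Qed.

Lemma rsum_tail g M N : (M <= N)%nat ->
  rsum (fun m => if Nat.ltb M m then g m else 0) N = rsum g N - rsum g M.
Proof.
  induction 1 as [|N HMN IH].
  - rewrite (rsum_ext _ (fun _ => 0)).
    + assert (rsum (fun _ => 0) M = 0) by (induction M; simpl; lra). lra.
    + intros m Hm. replace (Nat.ltb M m) with false; [reflexivity|].
      symmetry; apply Nat.ltb_ge; lia.
  - simpl. rewrite IH. replace (Nat.ltb M (S N)) with true; [ring|].
    symmetry; apply Nat.ltb_lt; lia.
Qed.

Lemma rsum_nondecreasing_abs f : Un_growing (rsum (fun n => Rabs (f n))).
Proof. intros n. simpl. pose proof (Rabs_pos (f (S n))). lra. Qed.

Lemma infinite_sum_rsum g l :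
  infinite_sum (fun m => g (S m)) l <-> Un_cv (rsum g) l.
Proof.
  assert (Hs : forall N, sum_f_R0 (fun m => g (S m)) N = rsum g (S N)).
  { induction N; simpl; [ring|rewrite IHN; reflexivity]. }
  split; intros H eps He; destruct (H eps He) as [N HN].
  - exists (S N). intros [|n] Hn; [lia|]. rewrite <- Hs. apply HN. lia.
  - exists N. intros n Hn. rewrite Hs. apply HN. lia.
Qed.

Definition Rnpow_neg (sg : R) (n : nat) : R := exp (- sg * ln (INR n)).

Lemma Rnpow_neg_pos sg n : 0 < Rnpow_neg sg n.
Proof. apply exp_pos. Qed.

Lemma Rnpow_neg_1 sg : Rnpow_neg sg 1 = 1.
Proof. unfold Rnpow_neg. simpl. rewrite ln_1, Rmult_0_r, exp_0. reflexivity. Qed.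

Lemma exp_ge_1_plus u : 1 + u <= exp u.
Proof.
  destruct (Req_dec u 0) as [->|Hu]; [rewrite exp_0; lra|].
  left; apply exp_ineq1; auto.
Qed.

(* The discrete form of [a x^(-a-1) = -(x^(-a))'], by convexity of [exp]. *)
Lemma Rnpow_neg_telescope a N : 0 < a -> (1 <= N)%nat ->
  a * Rnpow_neg (a + 1) (S N) <= Rnpow_neg a N - Rnpow_neg a (S N).
Proof.
  intros Ha HN. unfold Rnpow_neg.
  set (x := ln (INR (S N))). set (y := ln (INR N)).
  assert (HNr : 1 <= INR N) by (apply (le_INR 1); lia).
  assert (ex : exp x = INR N + 1) by (unfold x; rewrite S_INR, exp_ln; lra).
  assert (ey : exp y = INR N) by (unfold y; rewrite exp_ln; lra).
  assert (Hinv : 0 < / (INR N + 1)) by (apply Rinv_0_lt_compat; lra).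
  assert (Hxy : / (INR N + 1) <= x - y).
  { pose proof (exp_ge_1_plus (y - x)) as H.
    unfold Rminus in H; rewrite exp_plus, exp_Ropp, ex, ey in H.
    assert (INR N * / (INR N + 1) = 1 - / (INR N + 1)) by (field; lra). lra. }
  assert (Ex : exp (- (a + 1) * x) = exp (- a * x) * / (INR N + 1)).
  { replace (- (a + 1) * x) with (- a * x + - x) by ring.
    rewrite exp_plus, exp_Ropp, ex. reflexivity. }
  assert (Ey : exp (- a * y) = exp (- a * x) * exp (a * (x - y))).
  { rewrite <- exp_plus. f_equal; ring. }
  rewrite Ex, Ey.
  pose proof (exp_ge_1_plus (a * (x - y))). pose proof (exp_pos (- a * x)).
  assert (a * / (INR N + 1) <= a * (x - y)) by (apply Rmult_le_compat_l; lra).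
  assert (exp (- a * x) * (a * / (INR N + 1)) <= exp (- a * x) * (exp (a * (x - y)) - 1))
    by (apply Rmult_le_compat_l; lra).
  nra.
Qed.

Lemma rsum_Rnpow_neg_bound sg N : 1 < sg -> rsum (Rnpow_neg sg) N <= 1 + / (sg - 1).
Proof.
  intros Hs. set (a := sg - 1).
  assert (Ha : 0 < a) by (unfold a; lra).
  assert (Hind : forall N, rsum (Rnpow_neg sg) (S N) + Rnpow_neg a (S N) / a <= 1 + / a).
  { induction N0 as [|N0 IH].
    - simpl. rewrite !Rnpow_neg_1. unfold Rdiv. lra.
    - pose proof (Rnpow_neg_telescope a (S N0) Ha ltac:(lia)) as T.
      replace (a + 1) with sg in T by (unfold a; ring).
      simpl rsum in *. apply (Rmult_le_compat_r (/ a)) in T;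
        [|left; apply Rinv_0_lt_compat; lra].
      replace (a * Rnpow_neg sg (S (S N0)) * / a) with (Rnpow_neg sg (S (S N0))) in T
        by (field; lra).
      unfold Rdiv in *. lra. }
  assert (0 < / a) by (apply Rinv_0_lt_compat; lra).
  destruct N as [|N]; [simpl; lra|].
  pose proof (Hind N). pose proof (Rnpow_neg_pos a (S N)).
  assert (0 < Rnpow_neg a (S N) / a) by (apply Rdiv_lt_0_compat; lra). lra.
Qed.

Lemma Rnpow_neg_series_cv sg : 1 < sg -> exists l, Un_cv (rsum (Rnpow_neg sg)) l.
Proof.
  intros Hs. destruct (growing_cv (rsum (Rnpow_neg sg))) as [l Hl]; [| |now exists l].
  - intros n. simpl. pose proof (Rnpow_neg_pos sg (S n)). lra.
  - exists (1 + / (sg - 1)). intros x [n ->]. apply rsum_Rnpow_neg_bound; auto.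
Qed.

Lemma abs_cv_of_Rnpow_neg_bound (f : nat -> R) sg :
  1 < sg -> (forall n, Rabs (f n) <= Rnpow_neg sg n) ->
  (exists l, Un_cv (rsum f) l) /\ (exists B, Un_cv (rsum (fun n => Rabs (f n))) B).
Proof.
  intros Hs Hf. destruct (Rnpow_neg_series_cv sg Hs) as [l Hl].
  assert (Habs : ex_series (fun m => Rabs (f (S m)))).
  { apply (@ex_series_le R_AbsRing R_CompleteNormedModule _ (fun m => Rnpow_neg sg (S m))).
    - intros n. unfold norm; simpl; unfold abs; simpl. rewrite Rabs_Rabsolu. apply Hf.
    - exists l. apply is_series_Reals, infinite_sum_rsum; auto. }
  split.
  - destruct (ex_series_Rabs _ Habs) as [l' H]. exists l'.
    apply infinite_sum_rsum, is_series_Reals; auto.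
  - destruct Habs as [B H]. exists B. apply infinite_sum_rsum, is_series_Reals; auto.
Qed.

Lemma cv_abs_bounded Q q : Un_cv Q q -> exists A, forall K, Rabs (Q K) <= A.
Proof.
  intros H.
  destruct (cauchy_maj _ (CV_Cauchy _ (exist _ q H))) as [Amax HAmax].
  destruct (cauchy_min _ (CV_Cauchy _ (exist _ q H))) as [Amin HAmin].
  exists (Rmax (Rabs Amax) (Rabs Amin)). intros K.
  assert (Q K <= Amax) by (apply HAmax; exists K; reflexivity).
  assert (- Q K <= Amin) by (apply HAmin; exists K; reflexivity).
  unfold Rabs, Rmax; repeat destruct Rcase_abs; repeat destruct Rle_dec; lra.
Qed.

Lemma div_sq_lower_bound K M m N :
  (1 <= m)%nat -> (m <= M)%nat -> (K * (M * M) <= N)%nat -> (K <= N / (m * m))%nat.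
Proof.
  intros Hm HmM HN. apply Nat.div_le_lower_bound; [nia|].
  assert (m * m <= M * M)%nat by (apply Nat.mul_le_mono; lia). nia.
Qed.

(* Tannery's theorem for the truncations [N / m^2], which tend to infinity uniformly
   on [m <= M]: the head [m <= M] is small because [Q] is, the tail because [p] is
   absolutely summable. *)
Lemma cv_rsum_mul_div_sq_0 (p Q : nat -> R) B :
  Un_cv (rsum (fun m => Rabs (p m))) B -> Un_cv Q 0 ->
  Un_cv (fun N => rsum (fun m => p m * Q (N / (m * m))%nat) N) 0.
Proof.
  intros HB HQ eps He.
  destruct (cv_abs_bounded Q 0 HQ) as [A HA].
  assert (HA0 : 0 <= A) by (specialize (HA O); pose proof (Rabs_pos (Q O)); lra).
  pose proof (growing_ineq _ _ (rsum_nondecreasing_abs p) HB) as HBle.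
  assert (HB0 : 0 <= B) by (specialize (HBle O); simpl in HBle; lra).
  set (e1 := eps / (2 * (B + 1))). set (e2 := eps / (2 * (A + 1))).
  assert (He1 : 0 < e1) by (unfold e1; apply Rdiv_lt_0_compat; lra).
  assert (He2 : 0 < e2) by (unfold e2; apply Rdiv_lt_0_compat; lra).
  destruct (HB e2 He2) as [M HM]. specialize (HM M (Nat.le_refl _)).
  destruct (HQ e1 He1) as [K0 HK0].
  exists (Nat.max M (K0 * (M * M))). intros N HN.
  unfold R_dist. rewrite Rminus_0_r.
  eapply Rle_lt_trans; [apply rsum_abs|].
  eapply Rle_lt_trans.
  { apply (rsum_le _ (fun m => e1 * Rabs (p m)
                              + A * (if Nat.ltb M m then Rabs (p m) else 0))).
    intros m Hm. rewrite Rabs_mult. pose proof (Rabs_pos (p m)).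
    destruct (Nat.ltb M m) eqn:Em.
    - pose proof (HA (N / (m * m))%nat).
      assert (Rabs (p m) * Rabs (Q (N / (m * m))%nat) <= Rabs (p m) * A)
        by (apply Rmult_le_compat_l; auto). nra.
    - apply Nat.ltb_ge in Em.
      specialize (HK0 _ (div_sq_lower_bound K0 M m N ltac:(lia) Em ltac:(lia))). unfold R_dist in HK0. rewrite Rminus_0_r in HK0.
      assert (Rabs (p m) * Rabs (Q (N / (m * m))%nat) <= Rabs (p m) * e1)
        by (apply Rmult_le_compat_l; lra). nra. }
  rewrite rsum_plus, !rsum_scal, rsum_tail by lia.
  pose proof (HBle N). pose proof (HBle M). unfold R_dist in HM.
  rewrite Rabs_left1 in HM by lra.
  assert (e1 * rsum (fun m => Rabs (p m)) N <= e1 * B) by (apply Rmult_le_compat_l; lra).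
  assert (A * (rsum (fun m => Rabs (p m)) N - rsum (fun m => Rabs (p m)) M) <= A * e2)
    by (apply Rmult_le_compat_l; lra).
  assert (e1 * B < eps / 2).
  { unfold e1. apply (Rmult_lt_reg_r (2 * (B + 1))); [lra|]. field_simplify; [nra|lra]. }
  assert (A * e2 < eps / 2).
  { unfold e2. apply (Rmult_lt_reg_r (2 * (A + 1))); [lra|]. field_simplify; [nra|lra]. }
  lra.
Qed.

Lemma cv_rsum_mul_div_sq (p Q : nat -> R) P B q :
  Un_cv (rsum p) P -> Un_cv (rsum (fun m => Rabs (p m))) B -> Un_cv Q q ->
  Un_cv (fun N => rsum (fun m => p m * Q (N / (m * m))%nat) N) (P * q).
Proof.
  intros HP HB HQ.
  assert (HQ0 : Un_cv (fun K => Q K - q) 0).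
  { replace 0 with (q - q) by ring. apply CV_minus; auto.
    intros eps He; exists O; intros; unfold R_dist; rewrite Rminus_diag, Rabs_R0; lra. }
  assert (Hq : Un_cv (fun N => rsum p N * q) (P * q)).
  { apply CV_mult; auto. intros eps He; exists O; intros; unfold R_dist.
    rewrite Rminus_diag, Rabs_R0; lra. }
  rewrite <- (Rplus_0_l (P * q)).
  apply (Un_cv_ext (fun N => rsum (fun m => p m * (Q (N / (m * m))%nat - q)) N
                              + rsum p N * q)).
  - intros N. rewrite (Rmult_comm _ q), <- rsum_scal, <- rsum_plus.
    apply rsum_ext; intros; ring.
  - apply CV_plus; [apply (cv_rsum_mul_div_sq_0 p (fun K => Q K - q) B)|]; auto.
Qed.

Definition sqdvdb (m n : nat) : bool := Nat.eqb (n mod (m * m)) 0.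

Definition sq_conv (v u : nat -> R) (n : nat) : R :=
  rsum (fun m => if sqdvdb m n then v m * u (n / (m * m))%nat else 0) n.

Lemma div_succ q N : (1 <= q)%nat ->
  (S N / q = N / q + (if Nat.eqb (S N mod q) 0 then 1 else 0))%nat.
Proof.
  intros Hq. pose proof (Nat.div_mod N q ltac:(lia)) as HN.
  pose proof (Nat.mod_upper_bound N q ltac:(lia)) as Hm.
  destruct (Nat.eq_dec (N mod q + 1) q) as [E|E].
  - rewrite <- (Nat.div_unique (S N) q (N / q + 1) 0) by lia.
    rewrite <- (Nat.mod_unique (S N) q (N / q + 1) 0) by lia. simpl. lia.
  - rewrite <- (Nat.div_unique (S N) q (N / q) (N mod q + 1)) by lia.
    rewrite <- (Nat.mod_unique (S N) q (N / q) (N mod q + 1)) by lia.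
    destruct (Nat.eqb_spec (N mod q + 1) 0); lia.
Qed.

Lemma rsum_div_sq_succ u m N : (1 <= m)%nat ->
  rsum u (S N / (m * m)) =
  rsum u (N / (m * m)) + (if sqdvdb m (S N) then u (S N / (m * m))%nat else 0).
Proof.
  intros Hm. unfold sqdvdb. rewrite (div_succ (m * m) N) by nia.
  destruct (Nat.eqb (S N mod (m * m)) 0).
  - rewrite Nat.add_1_r. reflexivity.
  - rewrite Nat.add_0_r. ring.
Qed.

Lemma rsum_sq_conv v u N :
  rsum (sq_conv v u) N = rsum (fun m => v m * rsum u (N / (m * m))%nat) N.
Proof.
  induction N as [|N IH]; [reflexivity|].
  change (rsum (sq_conv v u) (S N)) with (rsum (sq_conv v u) N + sq_conv v u (S N)).
  rewrite IH. unfold sq_conv.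
  rewrite (rsum_ext (fun m => v m * rsum u (S N / (m * m))%nat)
     (fun m => v m * rsum u (N / (m * m))%nat
               + (if sqdvdb m (S N) then v m * u (S N / (m * m))%nat else 0))).
  2:{ intros m Hm. rewrite rsum_div_sq_succ by lia. destruct (sqdvdb m (S N)); ring. }
  rewrite rsum_plus.
  replace (rsum (fun m => v m * rsum u (N / (m * m))%nat) (S N))
    with (rsum (fun m => v m * rsum u (N / (m * m))%nat) N); [ring|].
  change (rsum ?g (S N)) with (rsum g N + g (S N)); cbv beta.
  replace (N / (S N * S N))%nat with 0%nat by (symmetry; apply Nat.div_small; nia).
  simpl. ring.
Qed.

Lemma sq_conv_series_cv (v u : nat -> R) V U B :
  Un_cv (rsum v) V -> Un_cv (rsum (fun m => Rabs (v m))) B -> Un_cv (rsum u) U ->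
  Un_cv (rsum (sq_conv v u)) (V * U).
Proof.
  intros HV HB HU.
  apply (Un_cv_ext (fun N => rsum (fun m => v m * rsum u (N / (m * m))%nat) N)).
  - intros N. symmetry. apply rsum_sq_conv.
  - apply (cv_rsum_mul_div_sq v (rsum u) V B U); auto.
Qed.

Definition Cabs_summable (f : nat -> Cpx) : Prop :=
  (exists B, Un_cv (rsum (fun n => Rabs (fst (f n)))) B) /\
  (exists B, Un_cv (rsum (fun n => Rabs (snd (f n)))) B).

Lemma Cseries1_rsum f l :
  Cseries1 f l <->
  Un_cv (rsum (fun n => fst (f n))) (fst l) /\ Un_cv (rsum (fun n => snd (f n))) (snd l).
Proof.
  unfold Cseries1.
  rewrite (infinite_sum_rsum (fun n => fst (f n))), (infinite_sum_rsum (fun n => snd (f n))).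
  reflexivity.
Qed.

Lemma Cseries1_ext f g l :
  (forall n, (1 <= n)%nat -> f n = g n) -> Cseries1 f l -> Cseries1 g l.
Proof.
  intros Hfg. rewrite !Cseries1_rsum. intros [Hr Hi].
  split; eapply Un_cv_ext; try eassumption; intros N; apply rsum_ext;
    intros n Hn; rewrite Hfg by lia; reflexivity.
Qed.

Lemma Cmul_comm z w : Cmul z w = Cmul w z.
Proof. unfold Cmul. f_equal; ring. Qed.

Definition Csq_conv (v u : nat -> Cpx) (n : nat) : Cpx :=
  (rsum (fun m => if sqdvdb m n then fst (Cmul (v m) (u (n / (m * m))%nat)) else 0) n,
   rsum (fun m => if sqdvdb m n then snd (Cmul (v m) (u (n / (m * m))%nat)) else 0) n).

Lemma Cseries1_Csq_conv (v u : nat -> Cpx) V U :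
  Cseries1 v V -> Cabs_summable v -> Cseries1 u U -> Cseries1 (Csq_conv v u) (Cmul V U).
Proof.
  rewrite !Cseries1_rsum. intros [HVr HVi] [[Br HBr] [Bi HBi]] [HUr HUi].
  pose (vr m := fst (v m)). pose (vi m := snd (v m)).
  pose (ur k := fst (u k)). pose (ui k := snd (u k)).
  split.
  - apply (Un_cv_ext (fun N => rsum (sq_conv vr ur) N - rsum (sq_conv vi ui) N)).
    + intros N. rewrite <- rsum_minus. apply rsum_ext; intros n _.
      unfold sq_conv. rewrite <- rsum_minus. apply rsum_ext; intros m _.
      simpl. destruct (sqdvdb m n); [reflexivity|ring].
    + apply CV_minus; [apply (sq_conv_series_cv _ _ _ _ Br)|apply (sq_conv_series_cv _ _ _ _ Bi)];
        assumption.
  - apply (Un_cv_ext (fun N => rsum (sq_conv vr ui) N + rsum (sq_conv vi ur) N)).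
    + intros N. rewrite <- rsum_plus. apply rsum_ext; intros n _.
      unfold sq_conv. rewrite <- rsum_plus. apply rsum_ext; intros m _.
      simpl. destruct (sqdvdb m n); [reflexivity|ring].
    + apply CV_plus; [apply (sq_conv_series_cv _ _ _ _ Br)|apply (sq_conv_series_cv _ _ _ _ Bi)];
        assumption.
Qed.

Lemma Cmul_Cnpow_neg_sq s m k : (1 <= m)%nat -> (1 <= k)%nat ->
  Cmul (Cnpow_neg m (2 * fst s - 1, 2 * snd s)) (Cnpow_neg k s) =
  Cscale (INR m) (Cnpow_neg (m * m * k) s).
Proof.
  intros Hm Hk. unfold Cmul, Cscale, Cnpow_neg. simpl fst; simpl snd.
  assert (Pm : 0 < INR m) by (apply lt_0_INR; lia).
  assert (Pk : 0 < INR k) by (apply lt_0_INR; lia).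
  rewrite !mult_INR, !ln_mult by (try apply Rmult_lt_0_compat; auto).
  set (Lm := ln (INR m)). set (Lk := ln (INR k)). set (sg := fst s). set (t := snd s).
  assert (Ee : exp (- (2 * sg - 1) * Lm) * exp (- sg * Lk) = INR m * exp (- sg * (Lm + Lm + Lk))).
  { replace (INR m) with (exp Lm) at 1 by (unfold Lm; rewrite exp_ln; auto).
    rewrite <- !exp_plus. f_equal. ring. }
  assert (Ec : cos (2 * t * Lm) * cos (t * Lk) - sin (2 * t * Lm) * sin (t * Lk)
               = cos (t * (Lm + Lm + Lk))).
  { rewrite <- cos_plus. f_equal. ring. }
  assert (Es : sin (2 * t * Lm) * cos (t * Lk) + cos (2 * t * Lm) * sin (t * Lk)
               = sin (t * (Lm + Lm + Lk))).
  { rewrite <- sin_plus. f_equal. ring. }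
  f_equal.
  - transitivity (exp (- (2 * sg - 1) * Lm) * exp (- sg * Lk) *
      (cos (2 * t * Lm) * cos (t * Lk) - sin (2 * t * Lm) * sin (t * Lk))); [ring|].
    rewrite Ee, Ec. ring.
  - transitivity (- (exp (- (2 * sg - 1) * Lm) * exp (- sg * Lk) *
      (sin (2 * t * Lm) * cos (t * Lk) + cos (2 * t * Lm) * sin (t * Lk)))); [ring|].
    rewrite Ee, Es. ring.
Qed.

Lemma Cnpow_neg_abs_bound s n :
  Rabs (fst (Cnpow_neg n s)) <= Rnpow_neg (fst s) n /\
  Rabs (snd (Cnpow_neg n s)) <= Rnpow_neg (fst s) n.
Proof.
  unfold Cnpow_neg, Rnpow_neg; simpl. rewrite Rabs_Ropp, !Rabs_mult, Rabs_pos_eq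
    by (left; apply exp_pos).
  pose proof (exp_pos (- fst s * ln (INR n))).
  assert (Rabs (cos (snd s * ln (INR n))) <= 1) by (apply Rabs_le, COS_bound).
  assert (Rabs (sin (snd s * ln (INR n))) <= 1) by (apply Rabs_le, SIN_bound).
  split; nra.
Qed.

Lemma zeta_abs_cv s : 1 < fst s ->
  (exists z, is_zeta s z) /\ Cabs_summable (fun n => Cnpow_neg n s).
Proof.
  intros Hs.
  destruct (abs_cv_of_Rnpow_neg_bound (fun n => fst (Cnpow_neg n s)) (fst s) Hs
              (fun n => proj1 (Cnpow_neg_abs_bound s n))) as [[zr Hzr] Hr].
  destruct (abs_cv_of_Rnpow_neg_bound (fun n => snd (Cnpow_neg n s)) (fst s) Hs
              (fun n => proj2 (Cnpow_neg_abs_bound s n))) as [[zi Hzi] Hi].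
  split; [|split; assumption].
  exists (zr, zi). apply Cseries1_rsum. split; assumption.
Qed.

Definition sq_div_sum (n : nat) : nat :=
  list_sum (map (fun m => if sqdvdb m n then m else O) (seq 1 n)).

Lemma INR_list_sum_seq (g : nat -> nat) N :
  INR (list_sum (map g (seq 1 N))) = rsum (fun m => INR (g m)) N.
Proof.
  induction N as [|N IH]; [reflexivity|].
  rewrite seq_S, map_app, list_sum_app, plus_INR, IH. simpl rsum.
  do 2 f_equal. simpl. lia.
Qed.

Lemma Csq_conv_Cnpow_neg s n : (1 <= n)%nat ->
  Csq_conv (fun m => Cnpow_neg m (2 * fst s - 1, 2 * snd s)) (fun k => Cnpow_neg k s) n =
  Cscale (INR (sq_div_sum n)) (Cnpow_neg n s).
Proof.
  intros Hn.
  assert (Hterm : forall m, (1 <= m)%nat -> sqdvdb m n = true ->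
    Cmul (Cnpow_neg m (2 * fst s - 1, 2 * snd s)) (Cnpow_neg (n / (m * m)) s) =
    Cscale (INR m) (Cnpow_neg n s)).
  { intros m Hm Hdiv. apply Nat.eqb_eq in Hdiv.
    assert (Hnk : n = (m * m * (n / (m * m)))%nat)
      by (pose proof (Nat.div_mod n (m * m) ltac:(nia)); lia).
    assert (Hk : (1 <= n / (m * m))%nat) by (destruct (n / (m * m))%nat; lia).
    rewrite (Cmul_Cnpow_neg_sq s m _ Hm Hk), <- Hnk. reflexivity. }
  unfold Csq_conv, sq_div_sum. rewrite INR_list_sum_seq. unfold Cscale at 1.
  rewrite !(Rmult_comm (rsum _ n)), <- !rsum_scal.
  f_equal; apply rsum_ext; intros m Hm; destruct (sqdvdb m n) eqn:Hdiv;
    try (simpl; ring); rewrite Hterm by (lia || assumption); simpl; ring.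
Qed.

Lemma sq_div_sum_dirichlet_series s : 1 < fst s ->
  exists z1 z2 : Cpx,
    is_zeta s z1 /\
    is_zeta (2 * fst s - 1, 2 * snd s) z2 /\
    Cseries1 (fun n => Cscale (INR (sq_div_sum n)) (Cnpow_neg n s)) (Cmul z1 z2).
Proof.
  intros Hs.
  destruct (zeta_abs_cv s Hs) as [[z1 Hz1] _].
  destruct (zeta_abs_cv (2 * fst s - 1, 2 * snd s) ltac:(simpl; lra)) as [[z2 Hz2] Habs].
  exists z1, z2. split; [|split]; try assumption.
  rewrite Cmul_comm. apply (Cseries1_ext _ _ _ (Csq_conv_Cnpow_neg s)).
  apply Cseries1_Csq_conv; assumption.
Qed.

Open Scope Z_scope.

Lemma injective_bounded_le (a b : nat) (f : nat -> nat) :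
  (forall i, (i < a)%nat -> (f i < b)%nat) ->
  (forall i j, (i < a)%nat -> (j < a)%nat -> f i = f j -> i = j) -> (a <= b)%nat.
Proof.
  intros Hb Hinj.
  replace a with (length (map f (seq 0 a))) by (rewrite length_map, length_seq; reflexivity).
  replace b with (length (seq 0 b)) by (rewrite length_seq; reflexivity).
  apply NoDup_incl_length.
  - apply NoDup_map_NoDup_ForallPairs; [|apply seq_NoDup].
    intros x y Hx Hy. apply in_seq in Hx, Hy. apply Hinj; lia.
  - intros y Hy. apply in_map_iff in Hy. destruct Hy as [x [<- Hx]]. apply in_seq in Hx.
    apply in_seq. specialize (Hb x ltac:(lia)). lia.
Qed.

Lemma finite_choice_nat (a : nat) (P : nat -> nat -> Prop) :
  (forall i, (i < a)%nat -> exists c, P i c) ->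
  exists f, forall i, (i < a)%nat -> P i (f i).
Proof.
  intros H.
  assert (H' : forall i, exists c, (i < a)%nat -> P i c).
  { intros i. destruct (Nat.lt_ge_cases i a) as [Hi|Hi].
    - destruct (H i Hi) as [c Hc]. exists c; auto.
    - exists O; intros; lia. }
  exists (fun i => proj1_sig (constructive_indefinite_description _ (H' i))).
  intros i Hi. destruct (constructive_indefinite_description _ (H' i)) as [c Hc]. auto.
Qed.

Lemma exists_least_nat (P : nat -> Prop) :
  (exists n, P n) -> exists n, P n /\ forall m, P m -> (n <= m)%nat.
Proof.
  intros Hex.
  destruct (dec_inh_nat_subset_has_unique_least_element P (fun n => classic (P n)) Hex)
    as [n [[Hn Hleast] _]].
  exists n. auto.
Qed.

Lemma dn_sub_pair x y : dn_sub x y = (fst x - fst y, snd x - snd y).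
Proof. unfold dn_sub, dn_add, dn_opp. f_equal; ring. Qed.

Section IdealArith.
Variable I : DN -> Prop.
Hypothesis HI : is_ideal I.

Lemma ideal_congr a b a' b' : I (a, b) -> a = a' -> b = b' -> I (a', b').
Proof. intros H -> ->. exact H. Qed.

Lemma ideal_add a b c d : I (a, b) -> I (c, d) -> I (a + c, b + d).
Proof. apply (proj1 (proj2 HI) (a, b) (c, d)). Qed.

Lemma ideal_opp a b : I (a, b) -> I (- a, - b).
Proof. apply (proj1 (proj2 (proj2 HI)) (a, b)). Qed.

Lemma ideal_sub a b c d : I (a, b) -> I (c, d) -> I (a - c, b - d).
Proof. intros Hab Hcd. apply ideal_add; [exact Hab|apply ideal_opp, Hcd]. Qed.

Lemma ideal_scale k a b : I (a, b) -> I (k * a, k * b).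
Proof.
  intros H. apply (proj2 (proj2 (proj2 HI)) (k, 0)) in H.
  unfold dn_mul in H. cbn [fst snd] in H. eapply ideal_congr; [exact H|ring|ring].
Qed.

Lemma ideal_mul_X a b : I (a, b) -> I (0, a).
Proof.
  intros H. apply (proj2 (proj2 (proj2 HI)) (0, 1)) in H.
  unfold dn_mul in H. cbn [fst snd] in H. eapply ideal_congr; [exact H|ring|ring].
Qed.

Lemma has_index_le n m : has_index I n -> has_index I m -> (n <= m)%nat.
Proof.
  intros [r1 [_ [D1 _]]] [r2 [_ [_ C2]]].
  destruct (finite_choice_nat n (fun i c => (c < m)%nat /\
              I (dn_sub (nth i r1 dn_zero) (nth c r2 dn_zero)))) as [f Hf].
  { intros i _. exact (C2 (nth i r1 dn_zero)). }
  apply (injective_bounded_le n m f); [intros i Hi; apply Hf, Hi|].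
  intros i j Hi Hj Efij. destruct (Nat.eq_dec i j) as [|Nij]; [assumption|exfalso].
  apply (D1 i j Hi Hj Nij).
  destruct (Hf i Hi) as [_ H1]. destruct (Hf j Hj) as [_ H2]. rewrite Efij in H1.
  rewrite dn_sub_pair in *. eapply ideal_congr; [apply (ideal_sub _ _ _ _ H1 H2)|ring|ring].
Qed.

End IdealArith.

Lemma has_index_unique I n m : is_ideal I -> has_index I n -> has_index I m -> n = m.
Proof.
  intros HI Hn Hm.
  pose proof (has_index_le I HI n m Hn Hm). pose proof (has_index_le I HI m n Hm Hn). lia.
Qed.

(* The subgroup of [Z^2] spanned by [(e, t)] and [(0, d)], i.e. generated by [e + t X]
   and [d X]; it is an ideal exactly when [d] divides [e], since [X (e + t X) = e X]. *)
Definition lattice_ideal (d e t : nat) (x : DN) : Prop :=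
  exists q r : Z, fst x = q * Z.of_nat e /\ snd x = q * Z.of_nat t + r * Z.of_nat d.

Lemma lattice_ideal_is_ideal d e t : (e mod d = 0)%nat -> is_ideal (lattice_ideal d e t).
Proof.
  intros Hde.
  assert (Hc : exists c, Z.of_nat e = c * Z.of_nat d).
  { exists (Z.of_nat (e / d)). rewrite (Nat.div_mod_eq e d) at 1. rewrite Hde. lia. }
  destruct Hc as [c Hc]. repeat split.
  - exists 0, 0. simpl. split; ring.
  - intros [a b] [a' b'] [q [r [H1 H2]]] [q' [r' [H1' H2']]]. simpl in *.
    exists (q + q'), (r + r'). unfold dn_add; simpl. split; subst; ring.
  - intros [a b] [q [r [H1 H2]]]. simpl in *.
    exists (- q), (- r). unfold dn_opp; simpl. split; subst; ring.
  - intros [r0 r1] [a b] [q [r [H1 H2]]]. simpl in *.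
    exists (r0 * q), (r0 * r + r1 * q * c). unfold dn_mul; simpl. rewrite H1, H2, Hc. split; ring.
Qed.

Lemma mul_bounded_eq_0 (x q m : Z) : 0 < m -> - m < x < m -> x = q * m -> q = 0.
Proof. intros Hm Hx ->. destruct (Z.eq_dec q 0); [assumption|nia]. Qed.

(* Representatives [(i, j)] with [0 <= i < e], [0 <= j < d], enumerated as [i d + j]. *)
Lemma lattice_ideal_has_index (d e t : nat) : (1 <= d)%nat -> (1 <= e)%nat ->
  has_index (lattice_ideal d e t) (d * e).
Proof.
  intros Hd He.
  set (f := fun idx => (Z.of_nat (idx / d), Z.of_nat (idx mod d))).
  assert (Hnth : forall i, (i < d * e)%nat -> nth i (map f (seq 0 (d * e))) dn_zero = f i).
  { intros i Hi. rewrite (nth_indep _ dn_zero (f O)) by (rewrite length_map, length_seq; auto).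
    rewrite map_nth, seq_nth by auto. reflexivity. }
  exists (map f (seq 0 (d * e))). split; [rewrite length_map, length_seq; reflexivity|]. split.
  - intros i j Hi Hj Nij [q [r [H1 H2]]]. rewrite !Hnth, dn_sub_pair in H1, H2 by assumption.
    unfold f in H1, H2; simpl in H1, H2.
    assert (i / d < e)%nat by (apply Nat.Div0.div_lt_upper_bound; lia).
    assert (j / d < e)%nat by (apply Nat.Div0.div_lt_upper_bound; lia).
    pose proof (Nat.mod_upper_bound i d ltac:(lia)). pose proof (Nat.mod_upper_bound j d ltac:(lia)).
    assert (q = 0) by (eapply mul_bounded_eq_0 with (m := Z.of_nat e); [| |exact H1]; lia).
    subst q.
    assert (r = 0) by (eapply mul_bounded_eq_0 with (m := Z.of_nat d); [| |exact H2]; lia).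
    subst r.
    apply Nij. rewrite (Nat.div_mod i d), (Nat.div_mod j d) by lia. lia.
  - intros [a b].
    set (q := a / Z.of_nat e). set (i := a mod Z.of_nat e).
    set (r := (b - q * Z.of_nat t) / Z.of_nat d). set (j := (b - q * Z.of_nat t) mod Z.of_nat d).
    pose proof (Z.mod_pos_bound a (Z.of_nat e) ltac:(lia)) as Bi.
    pose proof (Z.mod_pos_bound (b - q * Z.of_nat t) (Z.of_nat d) ltac:(lia)) as Bj.
    pose proof (Z.div_mod a (Z.of_nat e) ltac:(lia)) as Ea.
    pose proof (Z.div_mod (b - q * Z.of_nat t) (Z.of_nat d) ltac:(lia)) as Eb.
    fold q i in Bi, Ea. fold r j in Bj, Eb.
    set (idx := (Z.to_nat i * d + Z.to_nat j)%nat).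
    assert (Hidx : (idx < d * e)%nat) by (unfold idx; nia).
    exists idx. split; [exact Hidx|]. rewrite Hnth by exact Hidx.
    assert (D1 : (idx / d = Z.to_nat i)%nat).
    { symmetry. apply (Nat.div_unique idx d (Z.to_nat i) (Z.to_nat j)); unfold idx; lia. }
    assert (D2 : (idx mod d = Z.to_nat j)%nat).
    { symmetry. apply (Nat.mod_unique idx d (Z.to_nat i) (Z.to_nat j)); unfold idx; lia. }
    unfold f. rewrite D1, D2, !Z2Nat.id, dn_sub_pair by lia.
    exists q, r. simpl. split; lia.
Qed.

Lemma lattice_ideal_inj d t d' t' e e' :
  (1 <= d)%nat -> (1 <= d')%nat -> (1 <= e)%nat -> (1 <= e')%nat ->
  (t < d)%nat -> (t' < d')%nat ->
  (forall x, lattice_ideal d e t x <-> lattice_ideal d' e' t' x) -> d = d' /\ e = e' /\ t = t'.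
Proof.
  intros Hd Hd' He He' Ht Ht' E.
  assert (Hmult : forall d e t d' e' t', (1 <= d)%nat -> (1 <= e')%nat ->
     (forall x, lattice_ideal d e t x -> lattice_ideal d' e' t' x) ->
     exists r, Z.of_nat d = r * Z.of_nat d').
  { intros d0 e0 t0 d1 e1 t1 H0 H1 H.
    destruct (H (0, Z.of_nat d0)) as [q [r [H2 H3]]]; [exists 0, 1; cbn [fst snd]; split; ring|].
    simpl in H2, H3. assert (q = 0) by nia. subst. exists r. lia. }
  destruct (Hmult d e t d' e' t' Hd He' (fun x => proj1 (E x))) as [r1 R1].
  destruct (Hmult d' e' t' d e t Hd' He (fun x => proj2 (E x))) as [r2 R2].
  assert (r1 > 0) by nia. assert (r2 > 0) by nia.
  assert (Dd : d = d') by nia. subst d'.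
  destruct (proj1 (E (Z.of_nat e, Z.of_nat t))) as [q [r [H2 H3]]];
    [exists 1, 0; cbn [fst snd]; split; ring|].
  destruct (proj2 (E (Z.of_nat e', Z.of_nat t'))) as [q' [r' [H2' H3']]];
    [exists 1, 0; cbn [fst snd]; split; ring|].
  simpl in *.
  assert (q > 0) by nia. assert (q' > 0) by nia.
  assert (q = 1) by nia. subst q.
  assert (r = 0) by (apply (mul_bounded_eq_0 (Z.of_nat t - Z.of_nat t') r (Z.of_nat d)); lia).
  subst r. split; [reflexivity|split; lia].
Qed.

Section Classification.
Variable I : DN -> Prop.
Hypothesis HI : is_ideal I.

(* Two of [0, 1, ..., n] are congruent modulo the ideal. *)
Lemma finite_index_ideal_fst_pos n : has_index I n ->
  exists e : nat, (1 <= e)%nat /\ exists b, I (Z.of_nat e, b).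
Proof.
  intros [reps [_ [_ C]]].
  destruct (finite_choice_nat (S n) (fun i c => (c < n)%nat /\
              I (dn_sub (Z.of_nat i, 0) (nth c reps dn_zero)))) as [f Hf].
  { intros i _. exact (C (Z.of_nat i, 0)). }
  assert (Hcol : exists i j, (i < S n)%nat /\ (j < S n)%nat /\ (j < i)%nat /\ f i = f j).
  { apply NNPP. intros Hno. assert (S n <= n)%nat; [|lia].
    apply (injective_bounded_le (S n) n f); [intros i Hi; apply Hf, Hi|].
    intros i j Hi Hj Efij. destruct (Nat.lt_total i j) as [Hlt|[Heq|Hgt]].
    - exfalso. apply Hno. exists j, i. auto.
    - exact Heq.
    - exfalso. apply Hno. exists i, j. auto. }
  destruct Hcol as [i [j [Hi [Hj [Hji Efij]]]]].
  destruct (Hf i Hi) as [_ H1]. destruct (Hf j Hj) as [_ H2]. rewrite Efij in H1.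
  rewrite dn_sub_pair in H1, H2.
  exists (i - j)%nat. split; [lia|]. exists 0.
  eapply ideal_congr; [apply (ideal_sub I HI _ _ _ _ H1 H2)|simpl; lia|simpl; ring].
Qed.

Section LeastElements.
Variables (d e : nat) (b0 : Z).
Hypothesis Hd : (1 <= d)%nat.
Hypothesis Id : I (0, Z.of_nat d).
Hypothesis d_least : forall m : nat, (1 <= m)%nat -> I (0, Z.of_nat m) -> (d <= m)%nat.
Hypothesis He : (1 <= e)%nat.
Hypothesis Ie : I (Z.of_nat e, b0).
Hypothesis e_least : forall (m : nat) b, (1 <= m)%nat -> I (Z.of_nat m, b) -> (e <= m)%nat.

Lemma ideal_X_axis_mod y : I (0, y) -> y mod Z.of_nat d = 0.
Proof.
  intros Hy. pose proof (Z.mod_pos_bound y (Z.of_nat d) ltac:(lia)).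
  pose proof (Z.div_mod y (Z.of_nat d) ltac:(lia)).
  assert (Hmod : I (0, y mod Z.of_nat d)).
  { eapply ideal_congr;
      [apply (ideal_sub I HI _ _ _ _ Hy (ideal_scale I HI (y / Z.of_nat d) _ _ Id))|ring|lia]. }
  destruct (Z.eq_dec (y mod Z.of_nat d) 0) as [|Hnz]; [assumption|exfalso].
  specialize (d_least (Z.to_nat (y mod Z.of_nat d))). rewrite Z2Nat.id in d_least by lia.
  assert (d <= Z.to_nat (y mod Z.of_nat d))%nat by (apply d_least; [lia|exact Hmod]). lia.
Qed.

Lemma ideal_fst_mod a b : I (a, b) -> a mod Z.of_nat e = 0.
Proof.
  intros Hab. pose proof (Z.mod_pos_bound a (Z.of_nat e) ltac:(lia)).
  pose proof (Z.div_mod a (Z.of_nat e) ltac:(lia)).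
  assert (Hmod : I (a mod Z.of_nat e, b - a / Z.of_nat e * b0)).
  { eapply ideal_congr;
      [apply (ideal_sub I HI _ _ _ _ Hab (ideal_scale I HI (a / Z.of_nat e) _ _ Ie))|lia|ring]. }
  destruct (Z.eq_dec (a mod Z.of_nat e) 0) as [|Hnz]; [assumption|exfalso].
  specialize (e_least (Z.to_nat (a mod Z.of_nat e))). rewrite Z2Nat.id in e_least by lia.
  assert (e <= Z.to_nat (a mod Z.of_nat e))%nat by (apply (e_least _ ltac:(lia) Hmod)). lia.
Qed.

Lemma least_fst_mod_X_axis : (e mod d = 0)%nat.
Proof.
  pose proof (ideal_X_axis_mod _ (ideal_mul_X I HI _ _ Ie)) as H.
  rewrite <- Nat2Z.inj_mod in H. lia.
Qed.

Lemma ideal_eq_lattice_ideal :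
  forall x, I x <-> lattice_ideal d e (Z.to_nat (b0 mod Z.of_nat d)) x.
Proof.
  set (t := Z.to_nat (b0 mod Z.of_nat d)).
  pose proof (Z.mod_pos_bound b0 (Z.of_nat d) ltac:(lia)).
  assert (Ht : Z.of_nat t = b0 mod Z.of_nat d) by (unfold t; rewrite Z2Nat.id; lia).
  assert (Iet : I (Z.of_nat e, Z.of_nat t)).
  { pose proof (Z.div_mod b0 (Z.of_nat d) ltac:(lia)).
    eapply ideal_congr;
      [apply (ideal_sub I HI _ _ _ _ Ie (ideal_scale I HI (b0 / Z.of_nat d) _ _ Id))|ring|lia]. }
  intros [a b]. split.
  - intros Hab. set (q := a / Z.of_nat e).
    pose proof (Z.div_mod a (Z.of_nat e) ltac:(lia)) as Ea.
    rewrite (ideal_fst_mod a b Hab), Z.add_0_r in Ea.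
    assert (Hrest : I (0, b - q * Z.of_nat t)).
    { eapply ideal_congr; [apply (ideal_sub I HI _ _ _ _ Hab (ideal_scale I HI q _ _ Iet))|
        unfold q; lia|reflexivity]. }
    pose proof (ideal_X_axis_mod _ Hrest) as Hr.
    pose proof (Z.div_mod (b - q * Z.of_nat t) (Z.of_nat d) ltac:(lia)).
    exists q, ((b - q * Z.of_nat t) / Z.of_nat d). simpl. split; lia.
  - intros [q [r [H1 H2]]]. simpl in H1, H2.
    eapply ideal_congr;
      [apply (ideal_add I HI _ _ _ _ (ideal_scale I HI q _ _ Iet) (ideal_scale I HI r _ _ Id))
      |lia|lia].
Qed.

End LeastElements.

Lemma ideal_classification n : has_index I n ->
  exists d e t : nat, (1 <= d)%nat /\ (1 <= e)%nat /\ (e mod d = 0)%nat /\ (t < d)%nat /\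
    (d * e = n)%nat /\ forall x, I x <-> lattice_ideal d e t x.
Proof.
  intros Hn.
  destruct (exists_least_nat _ (finite_index_ideal_fst_pos n Hn))
    as [e [[He [b0 Ie]] e_least]].
  destruct (exists_least_nat (fun d => (1 <= d)%nat /\ I (0, Z.of_nat d)))
    as [d [[Hd Id] d_least]].
  { exists e. split; [exact He|exact (ideal_mul_X I HI _ _ Ie)]. }
  assert (d_least' : forall m, (1 <= m)%nat -> I (0, Z.of_nat m) -> (d <= m)%nat)
    by (intros m Hm Im; exact (d_least m (conj Hm Im))).
  assert (e_least' : forall m b, (1 <= m)%nat -> I (Z.of_nat m, b) -> (e <= m)%nat)
    by (intros m b Hm Im; exact (e_least m (conj Hm (ex_intro _ b Im)))).
  pose proof (least_fst_mod_X_axis d e b0 Hd Id d_least' He Ie) as Hde.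
  pose proof (ideal_eq_lattice_ideal d e b0 Hd Id d_least' He Ie e_least') as Heq.
  set (t := Z.to_nat (b0 mod Z.of_nat d)) in Heq.
  exists d, e, t. refine (conj Hd (conj He (conj Hde (conj _ (conj _ Heq))))).
  - unfold t. pose proof (Z.mod_pos_bound b0 (Z.of_nat d) ltac:(lia)). lia.
  - apply (has_index_unique (lattice_ideal d e t)).
    + apply lattice_ideal_is_ideal, Hde.
    + apply lattice_ideal_has_index; assumption.
    + destruct Hn as [reps [Hl [D C]]]. exists reps. split; [exact Hl|split].
      * intros i j Hi Hj Nij HJ. apply (D i j Hi Hj Nij), Heq, HJ.
      * intros x. destruct (C x) as [i [Hi Ix]]. exists i. split; [exact Hi|apply Heq, Ix].
Qed.

End Classification.

Lemma ideal_count_of_parametrization {A : Type} (n : nat) (C : list A) (F : A -> DN -> Prop) :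
  NoDup C ->
  (forall c, In c C -> is_ideal (F c) /\ has_index (F c) n) ->
  (forall c c', In c C -> In c' C -> (forall x, F c x <-> F c' x) -> c = c') ->
  (forall I, is_ideal I -> has_index I n -> exists c, In c C /\ forall x, I x <-> F c x) ->
  ideal_count n (length C).
Proof.
  intros HC Hideal Hinj Hsurj.
  destruct C as [|c0 C'] eqn:EC.
  - exists nil. repeat split; try (intros; simpl in *; lia).
    intros I HI Hn. destruct (Hsurj I HI Hn) as [c [[] _]].
  - rewrite <- EC in *.
    assert (Hnth : forall i, (i < length C)%nat ->
              nth i (map F C) (fun _ => False) = F (nth i C c0)).
    { intros i Hi. rewrite (nth_indep _ _ (F c0)) by (rewrite length_map; exact Hi).
      apply map_nth. }
    exists (map F C). split; [apply length_map|split; [|split]].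
    + intros i Hi. rewrite Hnth by exact Hi. apply Hideal, nth_In, Hi.
    + intros i j Hi Hj Nij. apply NNPP. intros Hno. rewrite !Hnth in Hno by assumption.
      apply Nij, (proj1 (NoDup_nth C c0) HC i j Hi Hj), Hinj; try (apply nth_In; assumption).
      intros x. apply NNPP. intros Hx. apply Hno. exists x. exact Hx.
    + intros I HI Hn. destruct (Hsurj I HI Hn) as [c [Hc HIc]].
      destruct (In_nth C c c0 Hc) as [i [Hi Ei]].
      exists i. split; [exact Hi|]. rewrite Hnth, Ei by exact Hi. exact HIc.
Qed.

Definition ideal_codes (n : nat) : list (nat * nat) :=
  flat_map (fun d => if sqdvdb d n then map (pair d) (seq 0 d) else nil) (seq 1 n).

Lemma in_ideal_codes n d t :
  In (d, t) (ideal_codes n) <-> (1 <= d <= n)%nat /\ sqdvdb d n = true /\ (t < d)%nat.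
Proof.
  unfold ideal_codes. rewrite in_flat_map. split.
  - intros [d' [Hd' Hin]]. apply in_seq in Hd'. destruct (sqdvdb d' n) eqn:E; [|destruct Hin].
    apply in_map_iff in Hin. destruct Hin as [t' [Ht' Hin]]. injection Ht' as -> ->.
    apply in_seq in Hin. repeat split; auto; lia.
  - intros [Hd [E Ht]]. exists d. split; [apply in_seq; lia|]. rewrite E. apply in_map_iff.
    exists t. split; [reflexivity|apply in_seq; lia].
Qed.

Lemma NoDup_flat_map_fst {B : Type} (F : nat -> list (nat * B)) l : NoDup l ->
  (forall x, NoDup (F x)) -> (forall x y, In y (F x) -> fst y = x) -> NoDup (flat_map F l).
Proof.
  intros Hl HF Hfst. induction Hl as [|x l Hx Hl IH]; simpl; [constructor|].
  apply NoDup_app; [apply HF|exact IH|].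
  intros y Hy Hy'. apply in_flat_map in Hy'. destruct Hy' as [x' [Hx' Hy']].
  apply Hfst in Hy, Hy'. congruence.
Qed.

Lemma ideal_codes_NoDup n : NoDup (ideal_codes n).
Proof.
  apply NoDup_flat_map_fst; [apply seq_NoDup| |].
  - intros d. destruct (sqdvdb d n); [|constructor].
    apply NoDup_map_NoDup_ForallPairs; [|apply seq_NoDup].
    intros a b _ _ E. injection E as E. exact E.
  - intros d y Hy. destruct (sqdvdb d n); [|destruct Hy].
    apply in_map_iff in Hy. destruct Hy as [t [<- _]]. reflexivity.
Qed.

Lemma length_ideal_codes n : length (ideal_codes n) = sq_div_sum n.
Proof.
  unfold ideal_codes, sq_div_sum. rewrite length_flat_map. f_equal. apply map_ext.
  intros d. destruct (sqdvdb d n); [rewrite length_map, length_seq|]; reflexivity.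
Qed.

Lemma in_ideal_codes_div n d t : In (d, t) (ideal_codes n) ->
  (1 <= d)%nat /\ (1 <= n / d)%nat /\ (t < d)%nat /\ (d * (n / d) = n)%nat /\
  ((n / d) mod d = 0)%nat.
Proof.
  intros H. apply in_ideal_codes in H. destruct H as [Hd [E Ht]].
  unfold sqdvdb in E. apply Nat.eqb_eq in E.
  pose proof (Nat.div_mod n (d * d) ltac:(nia)) as Hn. rewrite E, Nat.add_0_r in Hn.
  set (k := (n / (d * d))%nat) in *.
  assert (Hnd : (n / d = k * d)%nat).
  { rewrite Hn. replace (d * d * k)%nat with ((k * d) * d)%nat by ring. apply Nat.div_mul. lia. }
  rewrite Hnd, Nat.Div0.mod_mul. assert (1 <= k)%nat by (destruct k; lia).
  repeat split; lia.
Qed.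

Lemma ideal_count_sq_div_sum n : (1 <= n)%nat -> ideal_count n (sq_div_sum n).
Proof.
  intros Hn. rewrite <- length_ideal_codes.
  apply (ideal_count_of_parametrization n (ideal_codes n)
           (fun c => lattice_ideal (fst c) (n / fst c) (snd c))).
  - apply ideal_codes_NoDup.
  - intros [d t] Hc. simpl. destruct (in_ideal_codes_div n d t Hc) as [Hd [He [_ [Hde Hmod]]]].
    split; [apply lattice_ideal_is_ideal, Hmod|].
    rewrite <- Hde at 2. apply lattice_ideal_has_index; assumption.
  - intros [d t] [d' t'] Hc Hc' E. simpl in E.
    destruct (in_ideal_codes_div n d t Hc) as [Hd [He [Ht _]]].
    destruct (in_ideal_codes_div n d' t' Hc') as [Hd' [He' [Ht' _]]].
    destruct (lattice_ideal_inj d t d' t' _ _ Hd Hd' He He' Ht Ht' E) as [-> [_ ->]].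
    reflexivity.
  - intros I HI Hidx.
    destruct (ideal_classification I HI n Hidx) as [d [e [t [Hd [He [Hde [Ht [Hn' Hiff]]]]]]]].
    exists (d, t). split.
    + apply in_ideal_codes. split; [nia|split; [|exact Ht]]. apply Nat.eqb_eq.
      rewrite <- Hn', (Nat.div_mod_eq e d), Hde, Nat.add_0_r.
      replace (d * (d * (e / d)))%nat with (e / d * (d * d))%nat by ring.
      apply Nat.Div0.mod_mul.
    + simpl. replace (n / d)%nat with e; [exact Hiff|].
      rewrite <- Hn', Nat.mul_comm, Nat.div_mul; lia.
Qed.

Lemma ideal_count_unique n k k' : ideal_count n k -> ideal_count n k' -> k = k'.
Proof.
  assert (Hle : forall k k', ideal_count n k -> ideal_count n k' -> (k <= k')%nat).
  { intros k0 k1 [L1 [_ [P1 [D1 _]]]] [L2 [_ [_ [_ C2]]]].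
    destruct (finite_choice_nat k0 (fun i c => (c < k1)%nat /\
        forall x, nth i L1 (fun _ => False) x <-> nth c L2 (fun _ => False) x)) as [f Hf].
    { intros i Hi. destruct (P1 i Hi) as [HI Hidx]. apply (C2 _ HI Hidx). }
    apply (injective_bounded_le k0 k1 f); [intros i Hi; apply Hf, Hi|].
    intros i j Hi Hj Efij. destruct (Nat.eq_dec i j) as [|Nij]; [assumption|exfalso].
    destruct (D1 i j Hi Hj Nij) as [x Hx]. apply Hx.
    destruct (Hf i Hi) as [_ H1]. destruct (Hf j Hj) as [_ H2]. rewrite Efij in H1.
    rewrite H1, H2. reflexivity. }
  intros Hk Hk'. pose proof (Hle k k' Hk Hk'). pose proof (Hle k' k Hk' Hk). lia.
Qed.

Close Scope Z_scope.

Theorem mainTheorem10 :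
  (forall n : nat, (1 <= n)%nat -> exists k : nat, ideal_count n k) /\
  (forall a : nat -> nat,
     (forall n : nat, (1 <= n)%nat -> ideal_count n (a n)) ->
     forall s : Cpx, 1 < Cre s ->
       exists z1 z2 : Cpx,
         is_zeta s z1 /\
         is_zeta (2 * fst s - 1, 2 * snd s) z2 /\
         Cseries1 (fun n => Cscale (INR (a n)) (Cnpow_neg n s)) (Cmul z1 z2)).
Proof.
  split.
  - intros n Hn. exists (sq_div_sum n). apply ideal_count_sq_div_sum, Hn.
  - intros a Ha s Hs.
    destruct (sq_div_sum_dirichlet_series s Hs) as [z1 [z2 [Hz1 [Hz2 Hprod]]]].
    exists z1, z2. split; [exact Hz1|split; [exact Hz2|]].
    apply (Cseries1_ext _ _ _ (fun n Hn => f_equal (fun k => Cscale (INR k) (Cnpow_neg n s))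
             (ideal_count_unique n _ _ (ideal_count_sq_div_sum n Hn) (Ha n Hn)))).
    exact Hprod.
Qed.
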